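(* Let $T$ be a type distribution on $\mathcal{S}\subseteq\mathbb{N}$, let $\mathcal{Q}_n$ be a monotone event, and let $\Lambda_n,\Lambda_n':\mathcal{S}\times\mathcal{S}\to\mathbb{N}$ satisfy $\Lambda_n(t,s)\le\Lambda_n'(t,s)$ for all $t,s\in\mathcal{S}$. Then: 1. if $\mathcal{Q}_n$ is increasing, $\mathbb{P}(\texttt{ARD}_n(T,\Lambda_n)\in\mathcal{Q}_n)\le\mathbb{P}(\texttt{ARD}_n(T,\Lambda_n')\in\mathcal{Q}_n)$; 2. if $\mathcal{Q}_n$ is decreasing, $\mathbb{P}(\texttt{ARD}_n(T,\Lambda_n)\in\mathcal{Q}_n)\ge\mathbb{P}(\texttt{ARD}_n(T,\Lambda_n')\in\mathcal{Q}_n)$.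
   Context: $\texttt{ARD}_n(T,\Lambda_n)$: vertex set $[n]$, types $T_v$ i.i.d. as $T$; with $V_t=\{v:T_v=t\}$, independently for each $(t,s)\in\mathcal{S}^2$ choose $\Lambda_n(t,s)$ arcs uniformly at random without replacement from $(V_t\times V_s)\setminus\{(v,v):v\in[n]\}$ (all of them if there are fewer). For marked digraphs, $G_1\subseteq G_2$ if vertices carry the same marks and arcs of $G_1$ are arcs of $G_2$; $\mathcal{Q}_n$ is increasing if $G_1\in\mathcal{Q}_n,G_1\subseteq G_2\Rightarrow G_2\in\mathcal{Q}_n$, decreasing if $G_2\in\mathcal{Q}_n,G_1\subseteq G_2\Rightarrow G_1\in\mathcal{Q}_n$, monotone if either. *)

From HB Require Import structures.
From mathcomp Require Import all_boot all_order all_algebra.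
From mathcomp Require Import all_classical all_reals.
From mathcomp Require Import ereal esum.
Set Implicit Arguments. Unset Strict Implicit. Unset Printing Implicit Defensive.
Import Order.TTheory GRing.Theory Num.Theory.
Local Open Scope ring_scope.

(* A marked digraph on vertex set [n] = 'I_n : a mark (type) for each vertex
   and a set of arcs.  An event is a boolean predicate on such pairs. *)
Definition event (n : nat) := {ffun 'I_n -> nat} -> {set ('I_n * 'I_n)} -> bool.

Definition loopless (n : nat) (A : {set ('I_n * 'I_n)}) : bool :=
  [forall v : 'I_n, (v, v) \notin A].

Definition increasing_event (n : nat) (Q : event n) : Prop :=
  forall (m : {ffun 'I_n -> nat}) (A B : {set ('I_n * 'I_n)}),
    loopless B -> A \subset B -> Q m A -> Q m B.

Definition decreasing_event (n : nat) (Q : event n) : Prop :=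
  forall (m : {ffun 'I_n -> nat}) (A B : {set ('I_n * 'I_n)}),
    loopless B -> A \subset B -> Q m B -> Q m A.

Definition type_distribution (R : realType) (S : set nat) (p : nat -> R) : Prop :=
  (forall t, 0 <= p t) /\ (forall t, ~ S t -> p t = 0) /\
  (\esum_(t in [set: nat]) (p t)%:E = 1%E).

Definition type_pairs (n : nat) (tau : {ffun 'I_n -> nat}) (t s : nat)
  : {set ('I_n * 'I_n)} :=
  [set e | (tau e.1 == t) && (tau e.2 == s) && (e.1 != e.2)].

(* The possible outcomes of the arc selection given the types: loopless arc sets
   containing exactly min(Lambda(t,s), |V_t x V_s \ diag|) arcs of each class.
   Choosing independently for each (t,s) a uniform subset of that size is the
   same as choosing the (disjoint) union uniformly among these arc sets. *)
Definition valid_arcs (n : nat) (tau : {ffun 'I_n -> nat}) (L : nat -> nat -> nat)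
  : {set {set ('I_n * 'I_n)}} :=
  [set A : {set ('I_n * 'I_n)} | loopless A &&
     [forall u : 'I_n, forall v : 'I_n,
        #|A :&: type_pairs tau (tau u) (tau v)|
          == minn (L (tau u) (tau v)) #|type_pairs tau (tau u) (tau v)|]].

(* P(ARD_n(T, L) \in Q): sum over type vectors tau of P(types = tau) times the
   conditional probability that the uniformly chosen arc set gives an element of Q. *)
Definition ARD_prob (R : realType) (n : nat) (p : nat -> R) (L : nat -> nat -> nat)
  (Q : event n) : \bar R :=
  \esum_(tau in [set: {ffun 'I_n -> nat}])
     ((\prod_(v : 'I_n) p (tau v)) *
      (#|[set A in valid_arcs tau L | Q tau A]|%:R / #|valid_arcs tau L|%:R))%:E.

From HB Require Import structures.
From mathcomp Require Import all_boot all_order all_algebra.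
From mathcomp Require Import all_classical all_reals.
From mathcomp Require Import ereal esum.
Import Order.TTheory GRing.Theory Num.Theory.
Set Implicit Arguments. Unset Strict Implicit. Unset Printing Implicit Defensive.

(* Given the types, the arc set is uniform among the loopless arc sets with exactly
   k(t,s) arcs in each class C(t,s) = (V_t x V_s) minus the diagonal, k being the
   arc numbers truncated at the class sizes m(t,s).  Raising one count k = k(t,s)
   by one, the flags (A, x) with x in C(t,s) \ A and (B, x) with x in B /\ C(t,s)
   correspond through A |-> A u {x}, so |V_k| (m - k) = |V_(k+1)| (k + 1); for an
   increasing event Q this map sends Q-flags to Q-flags, so only
   |V_k /\ Q| (m - k) <= |V_(k+1) /\ Q| (k + 1) survives, i.e. the conditional
   probability of Q does not drop.  Adding arcs one at a time from the counts of
   Lambda to those of Lambda' gives the increasing case; complements of decreasing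
   events are increasing; and the type weights vanish off S. *)

Section FlagCounting.
Variable T : finType.

Lemma cardsU1I (x : T) (A D : {set T}) :
  #|(x |: A) :&: D| = ((x \in D) && (x \notin A)) + #|A :&: D|.
Proof.
case xD: (x \in D) => /=.
  have -> : (x |: A) :&: D = x |: (A :&: D).
    by apply/setP => y; rewrite !inE; case: eqP => // ->; rewrite xD.
  by rewrite cardsU1 inE xD andbT.
suff -> : (x |: A) :&: D = A :&: D by [].
by apply/setP => y; rewrite !inE; case: eqP => // ->; rewrite xD !andbF.
Qed.

Lemma card_flags (U : {set {set T}}) (F : {set T} -> {set T}) c :
  {in U, forall A, #|F A| = c} ->
  #|[set p : {set T} * T | (p.1 \in U) && (p.2 \in F p.1)]| = #|U| * c.
Proof.
move=> cardF; rewrite -sum1_card.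
rewrite (eq_bigl (fun p => (p.1 \in U) && (p.2 \in F p.1))); last by move=> p; rewrite inE.
rewrite -(pair_big_dep (mem U) (fun A x => x \in F A) (fun _ _ => 1)) /=.
by rewrite -sum_nat_const; apply: eq_bigr => A /cardF <-; rewrite sum1_card.
Qed.

Variables (C : {set T}) (j : nat) (V W : {set {set T}}).
Hypothesis V_meet : {in V, forall A, #|A :&: C| = j}.
Hypothesis W_meet : {in W, forall B, #|B :&: C| = j.+1}.

Let card_missing : {in V, forall A, #|C :\: A| = #|C| - j}.
Proof. by move=> A /V_meet <-; rewrite cardsD finset.setIC. Qed.

Lemma shadow_up : {in V, forall A, {in C :\: A, forall x, x |: A \in W}} ->
  #|V| * (#|C| - j) <= #|W| * j.+1.
Proof.
move=> addW; rewrite -(card_flags card_missing) -(card_flags W_meet).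
rewrite -(@card_in_imset _ _ (fun p => (p.2 |: p.1, p.2))).
  apply/subset_leq_card/fintype.subsetP => q /imsetP [[A x]].
  rewrite inE /= => /andP [AV xCA] ->.
  by rewrite inE /= addW //= !inE eqxx; case/setDP: xCA => ->.
move=> [A x] [B y]; rewrite !inE /= => /andP [_ /andP [xA _]] /andP [_ /andP [yB _]].
by case=> eAB exy; subst y; rewrite -(setU1K xA) eAB setU1K.
Qed.

Lemma shadow_down : {in W, forall B, {in B :&: C, forall x, B :\ x \in V}} ->
  #|W| * j.+1 <= #|V| * (#|C| - j).
Proof.
move=> delV; rewrite -(card_flags card_missing) -(card_flags W_meet).
rewrite -(@card_in_imset _ _ (fun p => (p.1 :\ p.2, p.2))).
  apply/subset_leq_card/fintype.subsetP => q /imsetP [[B x]].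
  rewrite inE /= => /andP [BW xBC] ->.
  by rewrite inE /= delV //= !inE eqxx; case/setIP: xBC => _ ->.
move=> [A x] [B y]; rewrite !inE /= => /andP [_ /andP [xA _]] /andP [_ /andP [yB _]].
by case=> eAB exy; subst y; rewrite -(finset.setD1K xA) eAB finset.setD1K.
Qed.

End FlagCounting.

Lemma leq_cross_mul a b X Y p q : 0 < q ->
  X * p = Y * q -> a * p <= b * q -> a * Y <= b * X.
Proof.
move=> q_gt0 eXY le_ab; rewrite -(leq_pmul2r q_gt0) -mulnA -eXY.
by rewrite mulnCA [b * X * q]mulnAC [_ * X]mulnC leq_mul.
Qed.

Lemma ler_nat_ratio (R : numFieldType) a b X Y : 0 < X -> 0 < Y ->
  a * Y <= b * X -> ((a%:R / X%:R : R) <= b%:R / Y%:R)%R.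
Proof.
move=> X_gt0 Y_gt0 le_ab.
by rewrite ler_pdivrMr ?ltr0n // mulrAC ler_pdivlMr ?ltr0n // -!natrM ler_nat.
Qed.

Lemma decreasing_eventC n (Q : event n) :
  decreasing_event Q -> increasing_event (fun m A => ~~ Q m A).
Proof. by move=> decQ m A B lB sAB; apply: contra; apply: decQ. Qed.

Section ArcSets.
Variables (n : nat) (tau : {ffun 'I_n -> nat}).
Local Notation C := (type_pairs tau).
Local Notation arc := ('I_n * 'I_n)%type.

Definition arc_sets (k : nat -> nat -> nat) : {set {set arc}} :=
  [set A : {set arc} | loopless A &&
     [forall u : 'I_n, forall v : 'I_n,
        #|A :&: C (tau u) (tau v)| == k (tau u) (tau v)]].

Definition truncated_counts (L : nat -> nat -> nat) t s := minn (L t s) #|C t s|.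

Lemma valid_arcsE L : valid_arcs tau L = arc_sets (truncated_counts L).
Proof. by []. Qed.

Lemma arc_setsP k A :
  reflect (loopless A /\ forall u v, #|A :&: C (tau u) (tau v)| = k (tau u) (tau v))
          (A \in arc_sets k).
Proof.
rewrite inE; apply: (iffP andP) => [[lA /forallP cA] | [lA cA]]; split=> //.
  by move=> u v; apply/eqP; move/forallP: (cA u).
by apply/forallP => u; apply/forallP => v; rewrite cA.
Qed.

Lemma eq_arc_sets k k' : (forall u v, k (tau u) (tau v) = k' (tau u) (tau v)) ->
  arc_sets k = arc_sets k'.
Proof.
move=> ekk'; apply/setP => A; rewrite !inE; congr (_ && _).
by apply: eq_forallb => u; apply: eq_forallb => v; rewrite ekk'.
Qed.

Lemma arc_sets0_gt0 : 0 < #|arc_sets (fun _ _ => 0)|.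
Proof.
apply/card_gt0P; exists finset.set0; apply/arc_setsP; split=> [|u v].
  by apply/forallP => v; rewrite finset.in_set0.
by rewrite finset.set0I cards0.
Qed.

Lemma mem_type_pairs x t s t' s' :
  x \in C t s -> (x \in C t' s') = (t' == t) && (s' == s).
Proof.
by rewrite !inE => /andP [/andP [/eqP -> /eqP ->] ->]; rewrite andbT (eq_sym t) (eq_sym s).
Qed.

Definition bump_count (k : nat -> nat -> nat) t0 s0 t s :=
  k t s + ((t == t0) && (s == s0)).

Definition counts_le (k k' : nat -> nat -> nat) :=
  forall u v : 'I_n, k (tau u) (tau v) <= k' (tau u) (tau v).

Variable R : numFieldType.

Definition cond_prob (k : nat -> nat -> nat) (P : pred {set arc}) : R :=
  #|[set A in arc_sets k | P A]|%:R / #|arc_sets k|%:R.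

Section Bump.
Variables (k : nat -> nat -> nat) (u0 v0 : 'I_n).
Local Notation t0 := (tau u0).
Local Notation s0 := (tau v0).
Local Notation k' := (bump_count k t0 s0).

Lemma arc_sets_setU1 A x :
  A \in arc_sets k -> x \in C t0 s0 :\: A -> x |: A \in arc_sets k'.
Proof.
move=> /arc_setsP [lA cA] /setDP [xC xA]; apply/arc_setsP; split=> [|u v].
  apply/forallP => v; rewrite finset.in_setU1 negb_or (forallP lA) andbT.
  by apply: contraTneq xC => <-; rewrite !inE eqxx andbF.
by rewrite cardsU1I (mem_type_pairs _ _ xC) xA andbT cA addnC.
Qed.

Lemma arc_sets_setD1 B x :
  B \in arc_sets k' -> x \in B :&: C t0 s0 -> B :\ x \in arc_sets k.
Proof.
move=> /arc_setsP [lB cB] /setIP [xB xC]; apply/arc_setsP; split=> [|u v].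
  by apply/forallP => v; rewrite finset.in_setD1 negb_and (forallP lB) orbT.
have := cB u v; rewrite -{1}(finset.setD1K xB) cardsU1I (mem_type_pairs _ _ xC).
by rewrite finset.setD11 andbT addnC /bump_count => /addIn.
Qed.

Let meet_k : {in arc_sets k, forall A, #|A :&: C t0 s0| = k t0 s0}.
Proof. by move=> A /arc_setsP []. Qed.

Let meet_k' : {in arc_sets k', forall B, #|B :&: C t0 s0| = (k t0 s0).+1}.
Proof. by move=> B /arc_setsP [_ ->]; rewrite /bump_count !eqxx addn1. Qed.

Lemma card_arc_sets_bump :
  #|arc_sets k| * (#|C t0 s0| - k t0 s0) = #|arc_sets k'| * (k t0 s0).+1.
Proof.
apply/eqP; rewrite eqn_leq shadow_up ?shadow_down //.
- by move=> B BW x /(arc_sets_setD1 BW).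
- by move=> A AV x /(arc_sets_setU1 AV).
Qed.

Hypothesis k_lt : k t0 s0 < #|C t0 s0|.

Lemma arc_sets_bump_gt0 : 0 < #|arc_sets k| -> 0 < #|arc_sets k'|.
Proof.
move=> V_gt0; have : 0 < #|arc_sets k| * (#|C t0 s0| - k t0 s0).
  by rewrite muln_gt0 V_gt0 subn_gt0.
by rewrite card_arc_sets_bump muln_gt0 => /andP [].
Qed.

Lemma cond_prob_bump (Q : event n) : increasing_event Q -> 0 < #|arc_sets k| ->
  (cond_prob k (Q tau) <= cond_prob k' (Q tau))%R.
Proof.
move=> incQ V_gt0; apply: ler_nat_ratio (arc_sets_bump_gt0 V_gt0) _ => //.
apply: (leq_cross_mul _ card_arc_sets_bump) => //.
apply: shadow_up => [A | B |].
- by rewrite inE => /andP [AV _]; apply: meet_k.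
- by rewrite inE => /andP [BV _]; apply: meet_k'.
- move=> A; rewrite inE => /andP [AV QA] x xCA.
  have xAV := arc_sets_setU1 AV xCA.
  rewrite inE xAV /=; apply: incQ QA; last exact: finset.subsetUr.
  by case/arc_setsP: xAV.
Qed.

End Bump.

Lemma cond_probC k (P : pred {set arc}) : 0 < #|arc_sets k| ->
  cond_prob k (fun A => ~~ P A) = (1 - cond_prob k P)%R.
Proof.
move=> V_gt0; rewrite /cond_prob; set X := #|arc_sets k|.
have card_split : #|[set A in arc_sets k | P A]| + #|[set A in arc_sets k | ~~ P A]| = X.
  rewrite /X -(cardsID [set A | P A] (arc_sets k)) setIdE; congr (_ + _).
  by apply: eq_card => A; rewrite !inE andbC.
have -> : (#|[set A in arc_sets k | ~~ P A]|%:R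
            = X%:R - #|[set A in arc_sets k | P A]|%:R :> R)%R.
  by rewrite -card_split natrD addrAC subrr add0r.
by rewrite mulrBl divff // pnatr_eq0 -lt0n.
Qed.

Lemma counts_le_ind (k' : nat -> nat -> nat) (P : (nat -> nat -> nat) -> Prop) :
  (forall k, (forall u v, k (tau u) (tau v) = k' (tau u) (tau v)) -> P k) ->
  (forall k u v, counts_le k k' -> k (tau u) (tau v) < k' (tau u) (tau v) ->
     P (bump_count k (tau u) (tau v)) -> P k) ->
  forall k, counts_le k k' -> P k.
Proof.
move=> base step.
pose gap k := \sum_(e : 'I_n * 'I_n) (k' (tau e.1) (tau e.2) - k (tau e.1) (tau e.2)).
suff gap_ind N k : gap k < N -> counts_le k k' -> P k by move=> k; apply: gap_ind.
elim: N k => // N IH k; rewrite ltnS => gap_k le_k.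
have [/existsP [u /existsP [v lt_uv]] | /existsPn ge_k] :=
  boolP [exists u, exists v, k (tau u) (tau v) < k' (tau u) (tau v)].
  apply: (step k u v le_k lt_uv); apply: IH => [|a b].
    apply: (leq_trans _ gap_k).
    rewrite /gap (bigD1 (u, v)) //= [X in _ < X](bigD1 (u, v)) //=.
    rewrite /bump_count !eqxx addn1 -addSn subnS prednK ?subn_gt0 // leq_add2l.
    by apply: leq_sum => e _; rewrite leq_sub2l ?leq_addr.
  rewrite /bump_count; case: andP => [[/eqP -> /eqP ->] | _]; last by rewrite addn0.
  by rewrite addn1.
apply: base => a b; apply/eqP; rewrite eqn_leq le_k /=.
by move/existsPn: (ge_k a) => /(_ b); rewrite -leqNgt.
Qed.

Local Notation sizes := (fun t s => #|C t s|).

(* Needed because cond_prob is 0 on an empty family (x / 0 = 0). *)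
Lemma arc_sets_gt0 k : counts_le k sizes -> 0 < #|arc_sets k|.
Proof.
move=> le_k; suff : 0 < #|arc_sets (fun _ _ => 0)| -> 0 < #|arc_sets k|.
  by apply; apply: arc_sets0_gt0.
apply: (@counts_le_ind k (fun j => 0 < #|arc_sets j| -> 0 < #|arc_sets k|)).
- by move=> j /eq_arc_sets ->.
- move=> j u v le_j lt_j IH V_gt0; apply/IH/arc_sets_bump_gt0 => //.
  exact: leq_trans lt_j (le_k u v).
- by [].
Qed.

Lemma cond_prob_le (Q : event n) k k' : increasing_event Q ->
  counts_le k k' -> counts_le k' sizes ->
  (cond_prob k (Q tau) <= cond_prob k' (Q tau))%R.
Proof.
move=> incQ le_k le_k'.
apply: (@counts_le_ind k' (fun j => cond_prob j (Q tau) <= cond_prob k' (Q tau))%R _ _ k le_k).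
- by move=> j /eq_arc_sets eq_j; rewrite /cond_prob eq_j.
- move=> j u v le_j lt_j; apply: le_trans; apply: cond_prob_bump => //.
    exact: leq_trans lt_j (le_k' u v).
  by apply: arc_sets_gt0 => a b; apply: leq_trans (le_j a b) (le_k' a b).
Qed.

Lemma cond_prob_ge (Q : event n) k k' : decreasing_event Q ->
  counts_le k k' -> counts_le k' sizes ->
  (cond_prob k' (Q tau) <= cond_prob k (Q tau))%R.
Proof.
move=> decQ le_k le_k'.
have := cond_prob_le (decreasing_eventC decQ) le_k le_k'.
rewrite !cond_probC ?lerD2l ?lerN2 //; first exact: arc_sets_gt0.
by apply: arc_sets_gt0 => a b; apply: leq_trans (le_k a b) (le_k' a b).
Qed.

Lemma truncated_counts_le L L' : counts_le L L' ->
  counts_le (truncated_counts L) (truncated_counts L').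
Proof. by move=> le_L u v; rewrite leq_min geq_minr andbT (leq_trans (geq_minl _ _)). Qed.

Lemma truncated_counts_le_sizes L : counts_le (truncated_counts L) sizes.
Proof. by move=> u v; apply: geq_minr. Qed.

End ArcSets.

Local Open Scope ring_scope.

Theorem lemma5 (R : realType) (n : nat) (S : set nat) (p : nat -> R)
  (Q : event n) (L L' : nat -> nat -> nat) :
  type_distribution S p ->
  (forall t s, S t -> S s -> (L t s <= L' t s)%N) ->
  (increasing_event Q -> (ARD_prob p L Q <= ARD_prob p L' Q)%E) /\
  (decreasing_event Q -> (ARD_prob p L' Q <= ARD_prob p L Q)%E).
Proof.
move=> [p_ge0 [p_out _]] le_L.
have weight_ge0 (tau : {ffun 'I_n -> nat}) : 0 <= \prod_(v : 'I_n) p (tau v).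
  exact: prodr_ge0.
have weight_out (tau : {ffun 'I_n -> nat}) :
    ~ (forall v, S (tau v)) -> \prod_(v : 'I_n) p (tau v) = 0.
  by case/existsNP => v /p_out pv0; rewrite (bigD1 v) //= pv0 mul0r.
have le_trunc (tau : {ffun 'I_n -> nat}) : (forall v, S (tau v)) ->
    counts_le tau (truncated_counts tau L) (truncated_counts tau L').
  by move=> S_tau; apply: truncated_counts_le => u v; apply: le_L.
split=> mQ; apply: le_esum => tau _; rewrite lee_fin.
all: have [/le_trunc le_tau | /weight_out ->] := pselect (forall v, S (tau v));
  last by rewrite !mul0r.
all: rewrite !valid_arcsE; apply: ler_wpM2l; first exact: weight_ge0.
- exact: cond_prob_le (truncated_counts_le_sizes _ _).
- exact: cond_prob_ge (truncated_counts_le_sizes _ _).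
Qed.
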